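(* Let $T=\{(e_1,f_1),\dots,(e_m,f_m)\}\subset\mathbb{N}^2$ be completely disjointed and negative, with $f_1<\dots<f_m$. For a permutation $\sigma\in S_m$ put $\sigma(T)=\{(e_{\sigma(1)},f_1),\dots,(e_{\sigma(m)},f_m)\}$, and let $\mathcal{T}=\{\sigma(T)\mid\sigma\in S_m,\ \sigma(T)\text{ negative}\}$. Order $\mathcal{T}$ by declaring $\{(a_1,f_1),\dots,(a_m,f_m)\}<\{(b_1,f_1),\dots,(b_m,f_m)\}$ if $a_i>b_i$ for the smallest $i$ with $a_i\ne b_i$, and let $\widetilde{T}$ be the minimal element of $\mathcal{T}$. Then $\widetilde T$ is a negative twisted chain.
   Context: $\mathbb{N}$ = positive integers. A subset of $\mathbb{N}^2$ is negative if each element $(e,f)$ has $e<f$. A subset $\{(e_1,f_1),\dots,(e_m,f_m)\}$ of $\mathbb{N}^2$ is completely disjointed if the $2m$ numbers $e_1,f_1,\dots,e_m,f_m$ are pairwise distinct. For negative points, $(e,f)\prec(g,h)$ means $f<h$ and $e>g$, and $(c,d)\wedge(e,f)=(\max(c,e),\min(d,f))$. A negative twisted chain is a completely disjointed negative subset $T$ of $\mathbb{N}^2$ such that for all distinct $u,v\in T$, either $u\prec v$, or $v\prec u$, or $u\wedge v$ is not negative. *)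

From mathcomp Require Import all_boot all_fingroup.
Set Implicit Arguments. Unset Strict Implicit. Unset Printing Implicit Defensive.

(* Finite subsets of N^2 are represented by duplicate-free enumerations
   (lists) of their elements; points are pairs (e, f) of naturals. *)

Definition neg_pt (p : nat * nat) : bool := p.1 < p.2.

Definition negative (S : seq (nat * nat)) : bool := all neg_pt S.

Definition completely_disjointed (S : seq (nat * nat)) : bool :=
  uniq (flatten [seq [:: p.1; p.2] | p <- S]).

Definition prec (u v : nat * nat) : bool := (u.2 < v.2) && (v.1 < u.1).

Definition wedge (u v : nat * nat) : nat * nat := (maxn u.1 v.1, minn u.2 v.2).

Definition negative_twisted_chain (S : seq (nat * nat)) : Prop :=
  [/\ completely_disjointed S, negative S &
      forall u v, u \in S -> v \in S -> u <> v ->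
        [|| prec u v, prec v u | ~~ neg_pt (wedge u v)] ].

Definition sigmaT (m : nat) (e f : 'I_m -> nat) (s : 'S_m) : seq (nat * nat) :=
  [seq (e (s i), f i) | i : 'I_m].

Definition tlt (m : nat) (a b : 'I_m -> nat) : Prop :=
  exists i : 'I_m, (forall j : 'I_m, j < i -> a j = b j) /\ b i < a i.

From mathcomp Require Import all_boot all_fingroup.

Set Implicit Arguments.
Unset Strict Implicit.
Unset Printing Implicit Defensive.

(* If two rows i < j of the minimal arrangement had e (s i) < e (s j) < f i,
   exchanging their first coordinates would keep the arrangement negative and
   make it lexicographically larger at row i, i.e. strictly smaller in the
   order of the statement.  So for i < j either e (s j) < e (s i), which makes
   the two points comparable for the twisted order, or f i <= e (s j), which
   makes their wedge non-negative. *)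

Lemma completely_disjointed_map (T : Type) (g h : T -> nat) (l : seq T) :
  completely_disjointed [seq (g x, h x) | x <- l] = uniq (map g l ++ map h l).
Proof.
rewrite /completely_disjointed -map_comp; apply: perm_uniq.
elim: l => [|x l IH] //=.
rewrite perm_cons perm_sym -cat1s perm_catCA /= perm_cons perm_sym.
exact: IH.
Qed.

Lemma completely_disjointed_codom (T : finType) (g h : T -> nat) :
  completely_disjointed [seq (g i, h i) | i : T] = uniq (codom g ++ codom h).
Proof. by rewrite !codomE -completely_disjointed_map. Qed.

Lemma perm_codom_perm (T : finType) (s : {perm T}) : perm_eq (codom s) (enum T).
Proof.
apply: uniq_perm; [exact/injectiveP/perm_inj | exact: enum_uniq |].
by move=> x; rewrite mem_enum inj_card_onto //; apply: perm_inj.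
Qed.

Lemma completely_disjointed_sigmaT (m : nat) (e f : 'I_m -> nat) (s : 'S_m) :
  completely_disjointed [seq (e i, f i) | i : 'I_m] ->
  completely_disjointed (sigmaT e f s).
Proof.
rewrite /sigmaT !completely_disjointed_codom; apply: etrans.
apply: perm_uniq; rewrite perm_cat2r !codomE (map_comp e s).
exact/perm_map/perm_codom_perm.
Qed.

Lemma negative_sigmaTP (m : nat) (e f : 'I_m -> nat) (s : 'S_m) :
  reflect (forall i, e (s i) < f i) (negative (sigmaT e f s)).
Proof.
apply: (iffP allP) => [neg_s i | neg_s _ /imageP [i _ ->]]; last exact: neg_s.
by apply: (neg_s (e (s i), f i)); apply: image_f.
Qed.

Lemma negative_sigmaT_tperm (m : nat) (e f : 'I_m -> nat) (s : 'S_m) (i j : 'I_m) :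
  negative (sigmaT e f s) -> e (s j) < f i -> e (s i) < f j ->
  negative (sigmaT e f (tperm i j * s)%g).
Proof.
move/negative_sigmaTP => neg_s lt_ji lt_ij; apply/negative_sigmaTP => k.
by rewrite permM; case: tpermP => [->|->|]; rewrite ?neg_s.
Qed.

Lemma tltNle (m : nat) (a b : 'I_m -> nat) :
  tlt b a -> ~ ((forall i, a i = b i) \/ tlt a b).
Proof.
move=> [i [eq_i lt_i]] [eq_ab | [j [eq_j lt_j]]].
  by move: lt_i; rewrite eq_ab ltnn.
have [ij|ji|/val_inj eq_ij] := ltngtP i j.
- by move: lt_i; rewrite eq_j // ltnn.
- by move: lt_j; rewrite eq_i // ltnn.
- by move: lt_i; rewrite eq_ij ltnNge ltnW.
Qed.

Lemma tlt_tperm (m : nat) (a : 'I_m -> nat) (s : 'S_m) (i j : 'I_m) :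
  i < j -> a (s i) < a (s j) ->
  tlt (fun k => a ((tperm i j * s)%g k)) (fun k => a (s k)).
Proof.
move=> ij lt_a; exists i; split => [k ki|]; last by rewrite permM tpermL.
by rewrite permM tpermD // -val_eqE /= ?(gtn_eqF ki) ?(gtn_eqF (ltn_trans ki ij)).
Qed.

Section LexMinimalArrangement.

Variables (m : nat) (e f : 'I_m -> nat) (s : 'S_m).
Hypothesis e_inj : injective e.
Hypothesis f_incr : {homo f : i j / i < j}.
Hypothesis s_neg : negative (sigmaT e f s).
Hypothesis s_min : forall t : 'S_m, negative (sigmaT e f t) ->
  (forall i, e (s i) = e (t i)) \/ tlt (fun i => e (s i)) (fun i => e (t i)).

Lemma lex_min_sigma_pair (i j : 'I_m) :
  i < j -> e (s j) < e (s i) \/ f i <= e (s j).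
Proof.
move=> ij; have [|lt_ij|eq_ij] := ltngtP (e (s j)) (e (s i)); first by left.
- right; rewrite leqNgt; apply/negP => lt_sj_fi.
  have t_neg : negative (sigmaT e f (tperm i j * s)%g).
    apply: negative_sigmaT_tperm => //.
    have /negative_sigmaTP neg_s := s_neg.
    exact: ltn_trans (neg_s i) (f_incr ij).
  exact: tltNle (tlt_tperm ij lt_ij) (s_min t_neg).
- by move/e_inj/perm_inj: eq_ij => eq_ij; move: ij; rewrite eq_ij ltnn.
Qed.

End LexMinimalArrangement.

Lemma wedgeC (u v : nat * nat) : wedge u v = wedge v u.
Proof. by rewrite /wedge maxnC minnC. Qed.

Lemma twisted_pair (u v : nat * nat) :
  u.2 < v.2 -> v.1 < u.1 \/ u.2 <= v.1 ->
  [|| prec u v, prec v u | ~~ neg_pt (wedge u v)].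
Proof.
case: u v => a b [c d] /= bd [ca|bc]; rewrite /prec /neg_pt /wedge /= bd ?ca //.
by rewrite (minn_idPl (ltnW bd)) -leqNgt leq_max bc !orbT.
Qed.

Theorem lemma9p2 (m : nat) (e f : 'I_m -> nat)
  (he_pos : forall i, 0 < e i)
  (hf_incr : forall i j : 'I_m, i < j -> f i < f j)
  (hT_cd : completely_disjointed [seq (e i, f i) | i : 'I_m])
  (hT_neg : negative [seq (e i, f i) | i : 'I_m])
  (s : 'S_m)
  (hs_neg : negative (sigmaT e f s))
  (hs_min : forall t : 'S_m, negative (sigmaT e f t) ->
              (forall i, e (s i) = e (t i)) \/
              tlt (fun i => e (s i)) (fun i => e (t i))) :
  negative_twisted_chain (sigmaT e f s).
Proof.
have e_inj : injective e.
  by move: hT_cd; rewrite completely_disjointed_codom cat_uniq => /andP [/injectiveP].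
have pair_ij (i j : 'I_m) : i < j ->
    [|| prec (e (s i), f i) (e (s j), f j), prec (e (s j), f j) (e (s i), f i)
      | ~~ neg_pt (wedge (e (s i), f i) (e (s j), f j))].
  by move=> ij; apply: twisted_pair; [exact: hf_incr | exact: lex_min_sigma_pair].
split; [exact: completely_disjointed_sigmaT | exact: hs_neg |].
move=> _ _ /imageP [i _ ->] /imageP [j _ ->] neq_ij.
have [ij|ji|/val_inj eq_ij] := ltngtP i j; first exact: pair_ij.
- by rewrite wedgeC orbCA; exact: pair_ij.
- by rewrite eq_ij in neq_ij.
Qed.
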